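(* Consider the autonomous system $\ddot q^{a}=-\Gamma^{a}_{bc}(q)\dot q^{b}\dot q^{c}-Q^{a}(q)$ on a (pseudo-)Riemannian manifold with metric $\gamma_{ab}$. Let $m\ge 3$ and $n\ge 1$ be integers. Suppose we are given: a constant $s$; a smooth function $G(q)$; an $m$th-order Killing tensor $C_{(0)i_1\dots i_m}(q)$; and, for each $k=0,1,\dots,n$ and $r=1,\dots,m-1$, totally symmetric $r$-rank tensor fields $L_{(k)i_1\dots i_r}(q)$, such that: (i) for $k=0,\dots,n-1$, the tensor $L_{(k)(i_1\dots i_{m-1};i_m)}$ is an $m$th-order Killing tensor, and $L_{(n)i_1\dots i_{m-1}}$ is an $(m-1)$th-order Killing tensor; (ii) $L_{(n)i_1}Q^{i_1}=s$; (iii) the following hold: \begin{align*} &L_{(n)(i_1\dots i_{m-2};i_{m-1})}=-\tfrac{m}{n}L_{(n-1)(i_1\dots i_{m-1};i_m)}Q^{i_m},\\ &L_{(k-1)(i_1\dots i_{m-2};i_{m-1})}=-\tfrac{m}{k-1}L_{(k-2)(i_1\dots i_{m-1};i_m)}Q^{i_m}-k\,L_{(k)i_1\dots i_{m-1}},\quad k=2,\dots,n,\\ &L_{(0)(i_1\dots i_{m-2};i_{m-1})}=m\,C_{(0)i_1\dots i_{m-1}i_m}Q^{i_m}-L_{(1)i_1\dots i_{m-1}},\\ &L_{(n)(i_1\dots i_{r-1};i_r)}=(r+1)L_{(n)i_1\dots i_r i_{r+1}}Q^{i_{r+1}},\quad r=2,\dots,m-2,\\ &L_{(k-1)(i_1\dots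 i_{r-1};i_r)}=(r+1)L_{(k-1)i_1\dots i_r i_{r+1}}Q^{i_{r+1}}-k\,L_{(k)i_1\dots i_r},\quad k=1,\dots,n,\ r=2,\dots,m-2,\\ &\big(L_{(n-1)c}Q^{c}\big)_{,i_1}=2n\,L_{(n)i_1i_2}Q^{i_2},\\ &\big(L_{(k-2)c}Q^{c}\big)_{,i_1}=2(k-1)L_{(k-1)i_1i_2}Q^{i_2}-k(k-1)L_{(k)i_1},\quad k=2,\dots,n,\\ &G_{,i_1}=2L_{(0)i_1i_2}Q^{i_2}-L_{(1)i_1}. \end{align*} Then \begin{align*} I^{(m)}_n=&\Big(C_{(0)i_1\dots i_m}-\sum_{k=1}^{n}\frac{t^{k}}{k}L_{(k-1)(i_1\dots i_{m-1};i_m)}\Big)\dot q^{i_1}\cdots\dot q^{i_m}+\sum_{r=1}^{m-1}\sum_{k=0}^{n}t^{k}L_{(k)i_1\dots i_r}\dot q^{i_1}\cdots\dot q^{i_r}\\ &+s\frac{t^{n+1}}{n+1}+\sum_{k=1}^{n}\frac{t^{k}}{k}L_{(k-1)c}Q^{c}+G(q) \end{align*} is a first integral of the system (constant along every solution).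
   Context: Indices are raised and lowered with $\gamma_{ab}$; Einstein summation convention; $\Gamma^a_{bc}$ are the Christoffel symbols of $\gamma_{ab}$; a comma denotes a partial derivative, a semicolon the Levi-Civita covariant derivative of $\gamma_{ab}$, and round brackets around indices denote total symmetrization (normalized). A totally symmetric tensor $K_{i_1\dots i_p}$ is a $p$th-order Killing tensor if $K_{(i_1\dots i_p;i_{p+1})}=0$. When $m=3$ the conditions with $r=2,\dots,m-2$ are vacuous; when $n=1$ the conditions with $k=2,\dots,n$ are vacuous. A first integral is a function of $(t,q,\dot q)$ constant along all solutions. *)

(* R : realType, points of the coordinate chart are row vectors 'rV[R]_N. *)
From HB Require Import structures.
From mathcomp Require Import all_boot all_order all_algebra all_fingroup.
From mathcomp Require Import all_classical all_reals all_analysis.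
Set Implicit Arguments. Unset Strict Implicit. Unset Printing Implicit Defensive.
Import Order.TTheory GRing.Theory Num.Theory.
Import numFieldNormedType.Exports.
Local Open Scope classical_set_scope.
Local Open Scope ring_scope.

Section Geometry.
Variables (R : realType) (N : nat).
Local Notation pt := 'rV[R]_N.

Definition pd (f : pt -> R) (i : 'I_N) : pt -> R :=
  fun x => derive f x (delta_mx ord0 i).

Fixpoint Ck (k : nat) (U : set pt) (f : pt -> R) : Prop :=
  match k with
  | 0 => forall x, U x -> {for x, continuous f}
  | k'.+1 => (forall x, U x -> differentiable f x) /\ (forall i, Ck k' U (pd f i))
  end.
Definition smooth (U : set pt) (f : pt -> R) : Prop := forall k, Ck k U f.

Definition gmat (gamma : 'I_N -> 'I_N -> pt -> R) (x : pt) : 'M[R]_N :=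
  \matrix_(a, b) gamma a b x.
Definition ginv (gamma : 'I_N -> 'I_N -> pt -> R) (x : pt) : 'M[R]_N :=
  invmx (gmat gamma x).
Definition Christoffel (gamma : 'I_N -> 'I_N -> pt -> R) (a b c : 'I_N) (x : pt) : R :=
  2^-1 * \sum_(d < N) ginv gamma x a d *
     (pd (gamma d c) b x + pd (gamma d b) c x - pd (gamma b c) d x).

(* A covariant tensor field: components indexed by a list of indices
   (the rank is the length of the list). *)
Definition tensor := seq 'I_N -> pt -> R.

Definition covD (gamma : 'I_N -> 'I_N -> pt -> R) (T : tensor) (ix : seq 'I_N) (j : 'I_N)
  (x : pt) : R :=
  pd (T ix) j x -
  \sum_(p < size ix) \sum_(c < N)
     Christoffel gamma c j (nth j ix p) x * T (set_nth c ix p c) x.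

(* nabla T (i_1 ... i_r j) := T_{i_1 ... i_r ; j}  (last index = derivative index) *)
Definition nabla (gamma : 'I_N -> 'I_N -> pt -> R) (T : tensor) : tensor :=
  fun js x => match js with
              | [::] => 0
              | j0 :: t => covD gamma T (belast j0 t) (last j0 t) x
              end.

Definition sym (T : tensor) : tensor :=
  fun js x => ((size js)`!%:R)^-1 *
    \sum_(s : 'S_(size js)) T [seq tnth (in_tuple js) (s p) | p <- enum 'I_(size js)] x.

Definition totally_symmetric (U : set pt) (r : nat) (T : tensor) : Prop :=
  forall x, U x -> forall (js : seq 'I_N) (s : 'S_(size js)), size js = r ->
    T [seq tnth (in_tuple js) (s p) | p <- enum 'I_(size js)] x = T js x.

Definition Killing (gamma : 'I_N -> 'I_N -> pt -> R) (U : set pt) (p : nat) (K : tensor)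
  : Prop :=
  totally_symmetric U p K /\
  forall x, U x -> forall js : seq 'I_N, size js = p.+1 -> sym (nabla gamma K) js x = 0.

Definition is_solution (gamma : 'I_N -> 'I_N -> pt -> R) (Q : 'I_N -> pt -> R)
  (U : set pt) (ta tb : R) (q : R -> pt) : Prop :=
  forall t, ta < t < tb ->
    [/\ U (q t), derivable q t 1, derivable (fun u => 'D_1 q u) t 1 &
      forall a : 'I_N,
        ('D_1 (fun u => 'D_1 q u) t) ord0 a =
          - (\sum_(b < N) \sum_(c < N)
               Christoffel gamma a b c (q t) * ('D_1 q t) ord0 b * ('D_1 q t) ord0 c)
          - Q a (q t)].

Definition first_integral (gamma : 'I_N -> 'I_N -> pt -> R) (Q : 'I_N -> pt -> R)
  (U : set pt) (F : R -> pt -> pt -> R) : Prop :=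
  forall (ta tb : R) (q : R -> pt), is_solution gamma Q U ta tb q ->
    forall t1 t2, ta < t1 < tb -> ta < t2 < tb ->
      F t1 (q t1) ('D_1 q t1) = F t2 (q t2) ('D_1 q t2).

Definition contrQ (T : tensor) (Q : 'I_N -> pt -> R) (ix : seq 'I_N) (x : pt) : R :=
  \sum_(c < N) T (rcons ix c) x * Q c x.

Definition fullcontr (r : nat) (T : tensor) (x v : pt) : R :=
  \sum_(ix : r.-tuple 'I_N) T ix x * \prod_(i <- ix) v ord0 i.

End Geometry.

From HB Require Import structures.
From mathcomp Require Import all_boot all_order all_algebra all_fingroup.
From mathcomp Require Import all_classical all_reals all_analysis.
From mathcomp Require Import ring zify.
Import Order.TTheory GRing.Theory Num.Theory.
Import numFieldNormedType.Exports.
Local Open Scope classical_set_scope.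
Local Open Scope ring_scope.
Set Implicit Arguments. Unset Strict Implicit. Unset Printing Implicit Defensive.

(* Along a solution with velocity v, the derivative of T_{i_1..i_r}(q) v^{i_1}..v^{i_r}, for a
   totally symmetric T, is T_{(i_1..i_r;j)} v^{i_1}..v^{i_r} v^j - r T_{i_1..i_{r-1}c} Q^c v^{i_1}..v^{i_{r-1}}:
   the Christoffel terms of the equation of motion are exactly those of the covariant derivative,
   and by symmetry the force may always be put on the last index.  The Killing conditions kill
   the top-order terms, and what remains of dI/dt is a polynomial in t whose coefficients,
   grouped by rank and power of t, cancel by (ii) and (iii). *)

Section TupleSums.
Variables (T : finType) (M : nmodType).

Lemma sum_tuple0 (F : 0.-tuple T -> M) : \sum_(ix : 0.-tuple T) F ix = F [tuple].
Proof. by rewrite (big_pred1 [tuple]) // => ix; apply/esym/eqP; exact: tuple0. Qed.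

Lemma sum_tuple_rcons r (F : r.+1.-tuple T -> M) :
  \sum_(js : r.+1.-tuple T) F js = \sum_(ix : r.-tuple T) \sum_(j : T) F [tuple of rcons ix j].
Proof.
rewrite pair_big /=.
pose h (p : r.-tuple T * T) : r.+1.-tuple T := [tuple of rcons p.1 p.2].
pose g (js : r.+1.-tuple T) : r.-tuple T * T :=
  ([tuple of belast (thead js) (behead js)], last (thead js) (behead js)).
have theadE (js : r.+1.-tuple T) : tval js = thead js :: behead js.
  by case: js => [[|i s] Hs] //=; rewrite /thead (tnth_nth i).
have hK : cancel h g.
  move=> [ix j]; have := lastI (thead (h (ix, j))) (behead (h (ix, j))).
  by rewrite -theadE => /rcons_inj[E1 E2]; congr pair => //; apply: val_inj.
rewrite (reindex h) /=; last by exists g => // js _; apply: val_inj; rewrite /= -lastI theadE.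
by apply: eq_bigr.
Qed.

Lemma sum_seq_rcons r (F : seq T -> M) :
  \sum_(js : r.+1.-tuple T) F js = \sum_(ix : r.-tuple T) \sum_(j : T) F (rcons ix j).
Proof. exact: (sum_tuple_rcons (fun js => F js)). Qed.

End TupleSums.

Section TupleSurgery.
Variables (T : Type) (r : nat).
Implicit Types (ix : r.-tuple T) (s : 'S_r).

Definition perm_tuple ix s : r.-tuple T := [tuple tnth ix (s q) | q < r].

Lemma perm_tupleK s : cancel (perm_tuple^~ s) (perm_tuple^~ s^-1%g).
Proof. by move=> ix; apply: eq_from_tnth => q; rewrite !tnth_mktuple permKV. Qed.

Lemma perm_tupleM ix s s' : perm_tuple (perm_tuple ix s) s' = perm_tuple ix (s' * s)%g.
Proof. by apply: eq_from_tnth => q; rewrite !tnth_mktuple permM. Qed.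

Definition set_tuple ix (p : 'I_r) (c : T) : r.-tuple T :=
  [tuple if q == p then c else tnth ix q | q < r].

Lemma tnth_set_tuple ix p c : tnth (set_tuple ix p c) p = c.
Proof. by rewrite tnth_mktuple eqxx. Qed.

Lemma set_tupleK ix p c : set_tuple (set_tuple ix p c) p (tnth ix p) = ix.
Proof. by apply: eq_from_tnth => q; rewrite !tnth_mktuple; case: eqP => [->|]. Qed.

Lemma set_nth_tuple ix (p : 'I_r) c : set_nth c ix p c = set_tuple ix p c.
Proof.
have sz : size (set_nth c ix p c) = r.
  by rewrite size_set_nth size_tuple; apply/maxn_idPr; exact: ltn_ord.
apply: (@eq_from_nth _ c); first by rewrite sz size_tuple.
rewrite sz => i ltir; rewrite nth_set_nth /=.
rewrite -[RHS](tnth_nth c (set_tuple ix p c) (Ordinal ltir)) tnth_mktuple (tnth_nth c).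
by rewrite -(inj_eq val_inj).
Qed.

End TupleSurgery.

Lemma sum_set_tuple (T : finType) (M : nmodType) r (p : 'I_r) (F : r.-tuple T -> T -> M) :
  \sum_(ix : r.-tuple T) \sum_(c : T) F (set_tuple ix p c) (tnth ix p)
  = \sum_(ix : r.-tuple T) \sum_(b : T) F ix b.
Proof.
rewrite !pair_big /=.
pose phi (z : r.-tuple T * T) := (set_tuple z.1 p z.2, tnth z.1 p).
have phiK : involutive phi by move=> [ix c]; rewrite /phi /= set_tupleK tnth_set_tuple.
by rewrite [RHS](reindex_inj (inv_inj phiK)).
Qed.


Section Contraction.
Variables (R : realType) (N : nat).
Local Notation pt := 'rV[R]_N.
Implicit Types (T A B : tensor R N) (x v : pt).

Definition monomial r v (ix : r.-tuple 'I_N) : R := \prod_(i <- ix) v ord0 i.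

Definition monomial_but r v (ix : r.-tuple 'I_N) (p : 'I_r) : R :=
  \prod_(q < r | q != p) v ord0 (tnth ix q).

Lemma monomialE r v (ix : r.-tuple 'I_N) : monomial v ix = \prod_(q < r) v ord0 (tnth ix q).
Proof. exact: big_tuple. Qed.

Lemma monomial_perm r v (ix : r.-tuple 'I_N) s : monomial v (perm_tuple ix s) = monomial v ix.
Proof.
rewrite !monomialE; under eq_bigr do rewrite tnth_mktuple.
by rewrite [RHS](reindex_inj (@perm_inj _ s)).
Qed.

Lemma monomial_but_split r v (ix : r.-tuple 'I_N) p :
  monomial v ix = v ord0 (tnth ix p) * monomial_but v ix p.
Proof. by rewrite monomialE (bigD1 p). Qed.

Lemma monomial_but_set r v (ix : r.-tuple 'I_N) p c :
  monomial_but v (set_tuple ix p c) p = monomial_but v ix p.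
Proof. by apply: eq_bigr => q /negPf qp; rewrite tnth_mktuple qp. Qed.

Lemma monomial_but_rcons r v (ix : r.-tuple 'I_N) c :
  monomial_but v [tuple of rcons ix c] ord_max = monomial v ix.
Proof.
rewrite /monomial_but big_mkcond big_ord_recr /= eqxx mulr1 monomialE.
apply: eq_bigr => q _; rewrite ifT; last by rewrite neq_ltn /= ltn_ord.
by rewrite (tnth_nth c) /= nth_rcons size_tuple (ltn_ord q) (tnth_nth c).
Qed.

Lemma fullcontrE r T x v : fullcontr r T x v = \sum_(ix : r.-tuple 'I_N) T ix x * monomial v ix.
Proof. by []. Qed.

Lemma fullcontr0 T x v : fullcontr 0 T x v = T [::] x.
Proof. by rewrite /fullcontr sum_tuple0 big_nil mulr1. Qed.

Lemma fullcontr1 T x v : fullcontr 1 T x v = \sum_(i < N) v ord0 i * T [:: i] x.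
Proof.
rewrite /fullcontr (sum_seq_rcons 0 (fun s => T s x * \prod_(i <- s) v ord0 i)) sum_tuple0.
by apply: eq_bigr => i _; rewrite big_seq1 mulrC.
Qed.

Lemma fullcontr_lincomb r T A B (a b : R) x v :
  (forall ix, size ix = r -> T ix x = a * A ix x - b * B ix x) ->
  fullcontr r T x v = a * fullcontr r A x v - b * fullcontr r B x v.
Proof.
move=> TAB; rewrite /fullcontr !mulr_sumr -sumrB.
by apply: eq_bigr => ix _; rewrite TAB ?size_tuple //; ring.
Qed.

Lemma fullcontr_scale r T A (a : R) x v :
  (forall ix, size ix = r -> T ix x = a * A ix x) ->
  fullcontr r T x v = a * fullcontr r A x v.
Proof.
move=> TA; rewrite /fullcontr mulr_sumr.
by apply: eq_bigr => ix _; rewrite TA ?size_tuple // mulrA.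
Qed.

Lemma fullcontr_eq0 r T x v : (forall ix, size ix = r -> T ix x = 0) -> fullcontr r T x v = 0.
Proof. by move=> T0; rewrite /fullcontr big1 // => ix _; rewrite T0 ?mul0r ?size_tuple. Qed.

Lemma fullcontrB_sum r A (I : Type) (s : seq I) (P : pred I) (c : I -> R) (B : I -> tensor R N) x v :
  fullcontr r (fun ix y => A ix y - \sum_(k <- s | P k) c k * B k ix y) x v
  = fullcontr r A x v - \sum_(k <- s | P k) c k * fullcontr r (B k) x v.
Proof.
rewrite /fullcontr; under [X in _ = _ - X]eq_bigr do rewrite mulr_sumr.
rewrite [X in _ = _ - X]exchange_big -sumrB /=; apply: eq_bigr => ix _.
by rewrite mulrBl mulr_suml; congr (_ - _); apply: eq_bigr => k _; ring.
Qed.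

Definition symmetric_at T r x :=
  forall (ix : r.-tuple 'I_N) (s : 'S_r), T (perm_tuple ix s) x = T ix x.

Lemma sym_tupleE T r (ix : r.-tuple 'I_N) x :
  sym T ix x = (r`!%:R)^-1 * \sum_(s : 'S_r) T (perm_tuple ix s) x.
Proof.
case: ix => js sz; move/eqP: (sz) => e; subst r.
rewrite /sym; congr (_ * _); apply: eq_bigr => s _; congr (T _ x).
by apply: eq_map => p /=; congr tnth; apply: val_inj.
Qed.

Lemma totally_symmetric_at (U : set pt) T r x :
  totally_symmetric U r T -> U x -> symmetric_at T r x.
Proof.
move=> symT Ux [js sz]; move/eqP: (sz) => e; subst r => s; rewrite -(symT x Ux js s erefl).
by congr (T _ x); apply: eq_map => p /=; congr tnth; apply: val_inj.
Qed.

Lemma fullcontr_sym r T x v : fullcontr r (sym T) x v = fullcontr r T x v.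
Proof.
have perm_inv (s : 'S_r) :
    \sum_(ix : r.-tuple 'I_N) T (perm_tuple ix s) x * monomial v ix = fullcontr r T x v.
  rewrite fullcontrE [RHS](reindex_inj (can_inj (perm_tupleK s))).
  by apply: eq_bigr => ix _; rewrite monomial_perm.
rewrite [LHS]fullcontrE; under eq_bigr do rewrite sym_tupleE -mulrA mulr_suml.
rewrite -mulr_sumr exchange_big /= (eq_bigr _ (fun s _ => perm_inv s)) sumr_const card_Sn.
by rewrite mulrnAr -[in LHS]mulr_natl mulrA mulfV ?mul1r // pnatr_eq0 -lt0n fact_gt0.
Qed.

End Contraction.

Section RealDerive.
Variable R : realType.
Implicit Types (t : R) (f : R -> R).

Lemma is_derive_sum_in (I : eqType) (s : seq I) (P : pred I) (F : I -> R -> R) (dF : I -> R) t :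
  (forall i, i \in s -> P i -> is_derive t 1 (F i) (dF i)) ->
  is_derive t 1 (fun u => \sum_(i <- s | P i) F i u) (\sum_(i <- s | P i) dF i).
Proof.
move=> dFi; rewrite -fct_sumE big_seq_cond [X in is_derive _ _ _ X]big_seq_cond.
elim/big_rec2: _ => [|i d f /andP[si Pi] df]; first exact: is_derive_cst.
exact: is_deriveD (dFi i si Pi) df.
Qed.

Lemma is_derive_prod n (h : 'I_n -> R -> R) (d : 'I_n -> R) t :
  (forall p, is_derive t 1 (h p) (d p)) ->
  is_derive t 1 (fun u => \prod_(p < n) h p u) (\sum_(p < n) d p * \prod_(q < n | q != p) h q t).
Proof.
elim: n h d => [|n IH] h d dh.
  by rewrite big_ord0 -fct_prodE big_ord0; exact: is_derive_cst.
rewrite -fct_prodE big_ord_recl fct_prodE.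
apply: (is_derive_eq (is_deriveM (dh ord0) (IH _ _ (fun p => dh (lift ord0 p))))).
rewrite big_ord_recl [in RHS]big_mkcond big_ord_recl /= mul1r addrC.
congr (_ + _); first exact: mulrC.
rewrite /GRing.scale /= mulr_sumr; apply: eq_bigr => p _.
rewrite [in RHS]big_mkcond big_ord_recl /= mulrCA; congr (_ * (_ * _)).
by rewrite big_mkcond; apply: eq_bigr => q _; rewrite (inj_eq (@lift_inj _ ord0)).
Qed.

Lemma is_derive_expr t k : is_derive t 1 (fun u => u ^+ k) (k%:R * t ^+ k.-1).
Proof.
have := is_deriveX k (is_derive_id t (1 : R)).
by rewrite exprfctE /GRing.scale /= mulr1.
Qed.

Lemma is_derive_expr_div t k : is_derive t 1 (fun u => u ^+ k.+1 / k.+1%:R) (t ^+ k).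
Proof.
apply: (is_derive_eq (is_deriveM (is_derive_expr t k.+1) (is_derive_cst (k.+1%:R^-1 : R) t 1))).
by rewrite /GRing.scale /= mulr0 add0r mulrA mulVf ?mul1r // pnatr_eq0.
Qed.

Lemma is_derive0_itv_cst f (a b : R) :
  (forall t, a < t < b -> is_derive t 1 f 0) ->
  forall t1 t2, a < t1 < b -> a < t2 < b -> f t1 = f t2.
Proof.
move=> f'0 t1 t2; wlog le12 : t1 t2 / t1 <= t2.
  by move=> H h1 h2; case: (leP t1 t2) => [|/ltW] le; [exact: H | apply/esym/H].
move=> /andP[at1 t1b] /andP[at2 t2b].
have inI x : t1 <= x <= t2 -> a < x < b.
  by case/andP => h1 h2; rewrite (lt_le_trans at1 h1) (le_lt_trans h2 t2b).
have f'0_in x : x \in `]t1, t2[ -> is_derive x 1 f 0.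
  by rewrite in_itv /= => /andP[h1 h2]; apply/f'0/inI; rewrite !ltW.
have fcont : {within `[t1, t2], continuous f}.
  apply: continuous_in_subspaceT => x; rewrite inE /= in_itv /= => /inI/f'0[].
  by move/derivable1_diffP/differentiable_continuous.
have [c _] := MVT_segment le12 f'0_in fcont.
by move/eqP; rewrite mul0r subr_eq0 => /eqP.
Qed.

End RealDerive.

Section PathDerive.
Variables (R : realType) (N : nat).
Local Notation pt := 'rV[R]_N.

Lemma is_derive_comp_pd (f : pt -> R) (q : R -> pt) t :
  derivable q t 1 -> differentiable f (q t) ->
  is_derive t 1 (fun u => f (q u)) (\sum_(i < N) ('D_1 q t) ord0 i * pd f i (q t)).
Proof.
move=> /derivable1_diffP dq df.
have dfq : differentiable (f \o q) t := differentiable_comp dq df.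
apply: DeriveDef; first exact: diff_derivable.
rewrite (deriveE _ dfq) (diff_comp dq df) /= -(deriveE _ dq).
rewrite [X in 'd f (q t) X]row_sum_delta linear_sum; apply: eq_bigr => i _.
by rewrite linearZ /= /pd (deriveE _ df).
Qed.

Lemma is_derive_coord (V : R -> pt) t i : derivable V t 1 ->
  is_derive t 1 (fun u => V u ord0 i) (('D_1 V t) ord0 i).
Proof.
move=> dV; apply: DeriveDef; first by move/derivable_mxP: dV; apply.
by rewrite (derive_mx dV) mxE.
Qed.

End PathDerive.

Section CovariantDerivative.
Variables (R : realType) (N : nat) (gamma : 'I_N -> 'I_N -> 'rV[R]_N -> R).
Local Notation pt := 'rV[R]_N.
Local Notation Gam := (Christoffel gamma).
Implicit Types (T : tensor R N) (x v : pt).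

Lemma covD_tuple T r (ix : r.-tuple 'I_N) j x :
  covD gamma T ix j x = pd (T ix) j x -
   \sum_(p < r) \sum_(c < N) Gam c j (tnth ix p) x * T (set_tuple ix p c) x.
Proof.
rewrite /covD size_tuple; congr (_ - _); apply: eq_bigr => p _; apply: eq_bigr => c _.
by rewrite set_nth_tuple (tnth_nth j).
Qed.

Lemma nabla_rcons T (s : seq 'I_N) j x : nabla gamma T (rcons s j) x = covD gamma T s j x.
Proof. by case: s => [|i s] //=; rewrite belast_rcons last_rcons. Qed.

Lemma sum_christoffel_term T r x v :
  \sum_(ix : r.-tuple 'I_N) \sum_(j < N)
     (\sum_(p < r) \sum_(c < N) Gam c j (tnth ix p) x * T (set_tuple ix p c) x) * (monomial v ix * v ord0 j)
  = \sum_(ix : r.-tuple 'I_N) T ix x * \sum_(p < r)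
     (\sum_(b < N) \sum_(c < N) Gam (tnth ix p) b c x * v ord0 b * v ord0 c) * monomial_but v ix p.
Proof.
transitivity (\sum_(p < r) \sum_(ix : r.-tuple 'I_N) \sum_(c < N) \sum_(j < N)
   Gam c j (tnth ix p) x * T (set_tuple ix p c) x
   * (v ord0 (tnth ix p) * monomial_but v (set_tuple ix p c) p) * v ord0 j).
  rewrite [RHS]exchange_big /=; apply: eq_bigr => ix _.
  under eq_bigr do rewrite mulr_suml.
  rewrite exchange_big /=; apply: eq_bigr => p _.
  under eq_bigr do rewrite mulr_suml.
  rewrite exchange_big /=; apply: eq_bigr => c _; apply: eq_bigr => j _.
  rewrite monomial_but_set -monomial_but_split; ring.
transitivity (\sum_(p < r) \sum_(ix : r.-tuple 'I_N) \sum_(b < N) \sum_(j < N)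
   Gam (tnth ix p) j b x * T ix x * (v ord0 b * monomial_but v ix p) * v ord0 j).
  apply: eq_bigr => p _; rewrite -(sum_set_tuple p (fun jx b => \sum_(j < N)
    Gam (tnth jx p) j b x * T jx x * (v ord0 b * monomial_but v jx p) * v ord0 j)).
  by apply: eq_bigr => ix _; apply: eq_bigr => c _; rewrite tnth_set_tuple.
rewrite exchange_big /=; apply: eq_bigr => ix _.
rewrite mulr_sumr; apply: eq_bigr => p _.
rewrite exchange_big mulr_suml mulr_sumr; apply: eq_bigr => b _.
by rewrite mulr_suml mulr_sumr; apply: eq_bigr => c _; ring.
Qed.

Lemma fullcontr_nabla T r x v :
  fullcontr r.+1 (nabla gamma T) x v =
  \sum_(ix : r.-tuple 'I_N) ((\sum_(i < N) v ord0 i * pd (T ix) i x) * monomial v ix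
    - T ix x * \sum_(p < r)
        (\sum_(b < N) \sum_(c < N) Gam (tnth ix p) b c x * v ord0 b * v ord0 c) * monomial_but v ix p).
Proof.
rewrite sumrB -sum_christoffel_term -sumrB /fullcontr.
rewrite (sum_seq_rcons r (fun s => nabla gamma T s x * \prod_(i <- s) v ord0 i)).
apply: eq_bigr => ix _; rewrite mulr_suml -sumrB; apply: eq_bigr => j _.
have -> : \prod_(i <- rcons ix j) v ord0 i = monomial v ix * v ord0 j by rewrite big_rcons.
by rewrite nabla_rcons covD_tuple; ring.
Qed.

End CovariantDerivative.

Section AlongSolutions.
Variables (R : realType) (N : nat) (gamma : 'I_N -> 'I_N -> 'rV[R]_N -> R) (Q : 'I_N -> 'rV[R]_N -> R).
Local Notation pt := 'rV[R]_N.
Implicit Types (T : tensor R N) (x v : pt).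

Lemma sum_force_term T r x v : symmetric_at T r.+1 x ->
  \sum_(ix : r.+1.-tuple 'I_N) T ix x * \sum_(p < r.+1) Q (tnth ix p) x * monomial_but v ix p
  = r.+1%:R * fullcontr r (contrQ T Q) x v.
Proof.
move=> symT.
have move_to_last (p : 'I_r.+1) :
  \sum_(ix : r.+1.-tuple 'I_N) T ix x * (Q (tnth ix p) x * monomial_but v ix p)
  = \sum_(ix : r.+1.-tuple 'I_N) T ix x * (Q (tnth ix ord_max) x * monomial_but v ix ord_max).
  pose tau := tperm p ord_max.
  rewrite (reindex_inj (can_inj (perm_tupleK tau))) /=; apply: eq_bigr => ix _.
  rewrite symT tnth_mktuple tpermL; congr (_ * (_ * _)).
  rewrite /monomial_but (reindex_inj (@perm_inj _ tau)) /=.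
  apply: eq_big => q; last by move=> _; rewrite tnth_mktuple tpermK.
  by rewrite -[X in _ != X](tpermR p ord_max) -/tau (inj_eq (@perm_inj _ tau)).
under eq_bigr do rewrite mulr_sumr.
rewrite exchange_big /= (eq_bigr _ (fun p _ => move_to_last p)) sumr_const card_ord.
rewrite -[in LHS]mulr_natl; congr (_ * _).
rewrite (sum_tuple_rcons (fun ix => T ix x * (Q (tnth ix ord_max) x * monomial_but v ix ord_max))).
apply: eq_bigr => ix _; rewrite /contrQ mulr_suml; apply: eq_bigr => c _.
rewrite monomial_but_rcons (tnth_nth c) /= nth_rcons size_tuple ltnn eqxx -/(monomial v ix); ring.
Qed.

Lemma is_derive_fullcontr T r (q : R -> pt) t :
  derivable q t 1 -> derivable (fun u => 'D_1 q u) t 1 ->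
  (forall ix : r.-tuple 'I_N, differentiable (T ix) (q t)) ->
  is_derive t 1 (fun u => fullcontr r T (q u) ('D_1 q u))
   (\sum_(ix : r.-tuple 'I_N) ((\sum_(i < N) ('D_1 q t) ord0 i * pd (T ix) i (q t)) * monomial ('D_1 q t) ix
     + T ix (q t) * \sum_(p < r) ('D_1 (fun u => 'D_1 q u) t) ord0 (tnth ix p) * monomial_but ('D_1 q t) ix p)).
Proof.
move=> dq dq' dT; apply: is_derive_sum_in => ix _ _.
have dmono : is_derive t 1 (fun u => \prod_(i <- ix) ('D_1 q u) ord0 i)
    (\sum_(p < r) ('D_1 (fun u => 'D_1 q u) t) ord0 (tnth ix p) * monomial_but ('D_1 q t) ix p).
  under eq_fun do rewrite big_tuple.
  by apply: is_derive_prod => p; exact: is_derive_coord.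
apply: (is_derive_eq (is_deriveM (is_derive_comp_pd dq (dT ix)) dmono)).
by rewrite /GRing.scale /= addrC mulrC.
Qed.

Lemma is_derive_fullcontr_solution U ta tb (q : R -> pt) t T r :
  is_solution gamma Q U ta tb q -> ta < t < tb ->
  (forall ix : r.+1.-tuple 'I_N, differentiable (T ix) (q t)) -> symmetric_at T r.+1 (q t) ->
  is_derive t 1 (fun u => fullcontr r.+1 T (q u) ('D_1 q u))
    (fullcontr r.+2 (nabla gamma T) (q t) ('D_1 q t)
     - r.+1%:R * fullcontr r (contrQ T Q) (q t) ('D_1 q t)).
Proof.
move=> sol tI dT symT; have [_ dq dq' accel] := sol t tI.
apply: (is_derive_eq (is_derive_fullcontr dq dq' dT)).
rewrite fullcontr_nabla -(sum_force_term _ symT) -sumrB; apply: eq_bigr => ix _.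
set v := 'D_1 q t; set mb := monomial_but v ix.
have -> : \sum_(p < r.+1) ('D_1 (fun u => 'D_1 q u) t) ord0 (tnth ix p) * mb p
    = - \sum_(p < r.+1) (\sum_(b < N) \sum_(c < N)
          Christoffel gamma (tnth ix p) b c (q t) * v ord0 b * v ord0 c) * mb p
      - \sum_(p < r.+1) Q (tnth ix p) (q t) * mb p.
  by rewrite -sumrN -sumrB; apply: eq_bigr => p _; rewrite accel; ring.
ring.
Qed.

Lemma fullcontr_nabla_Killing U p K x v : Killing gamma U p K -> U x ->
  fullcontr p.+1 (nabla gamma K) x v = 0.
Proof. by move=> [_ KK] Ux; rewrite -fullcontr_sym; apply: fullcontr_eq0 => ix; exact: KK. Qed.

Lemma is_derive_fullcontr_Killing U ta tb (q : R -> pt) t K p :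
  is_solution gamma Q U ta tb q -> ta < t < tb -> Killing gamma U p.+1 K ->
  (forall ix : p.+1.-tuple 'I_N, differentiable (K ix) (q t)) ->
  is_derive t 1 (fun u => fullcontr p.+1 K (q u) ('D_1 q u))
    (- (p.+1%:R * fullcontr p (contrQ K Q) (q t) ('D_1 q t))).
Proof.
move=> sol tI KK dK; have [Ut _ _ _] := sol t tI.
have symK := totally_symmetric_at KK.1 Ut.
apply: (is_derive_eq (is_derive_fullcontr_solution sol tI dK symK)).
by rewrite (fullcontr_nabla_Killing _ KK Ut) sub0r.
Qed.

End AlongSolutions.

Lemma near_eq_differentiable (R : realType) (V W : normedModType R) (f g : V -> W) x :
  (\forall y \near x, f y = g y) -> differentiable g x -> differentiable f x.
Proof.
move=> fg dg; have fxgx : f x = g x := nbhs_singleton fg.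
have fo : f \o shift x = cst (f x) + 'd g x +o_ 0 id.
  have /eqaddoP go := diff_locally dg.
  apply/eqaddoP => eps e0; have {}go := go eps e0.
  have fg0 : \forall h \near (0 : V), f (h + x) = g (h + x).
    by rewrite (near_shift x) /=; near=> y; rewrite /= sub0r addrNK; near: y.
  near=> h; have -> // : (f \o shift x - (cst (f x) + 'd g x)) h
      = (g \o shift x - (cst (g x) + 'd g x)) h.
    rewrite /= fxgx; change (f (h + x) - (g x + 'd g x h) = g (h + x) - (g x + 'd g x h)).
    by rewrite (near fg0 h).
  by near: h.
have e := diff_unique (diff_continuous dg) fo.
by apply/diff_locallyP; rewrite e; split => //; exact: diff_continuous.
Unshelve. all: by end_near. Qed.

Section BigDifferentiable.
Variables (R : realType) (V : normedModType R).
Implicit Types (x : V).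

Lemma differentiable_big_sum (I : Type) (s : seq I) (P : pred I) (F : I -> V -> R) x :
  (forall i, P i -> differentiable (F i) x) -> differentiable (fun y => \sum_(i <- s | P i) F i y) x.
Proof.
move=> dF; rewrite -fct_sumE; elim/big_rec: _ => [|i f Pi df]; last exact: differentiableD (dF i Pi) df.
exact: differentiable_cst.
Qed.

Lemma differentiable_big_prod (I : Type) (s : seq I) (P : pred I) (F : I -> V -> R) x :
  (forall i, P i -> differentiable (F i) x) -> differentiable (fun y => \prod_(i <- s | P i) F i y) x.
Proof.
move=> dF; rewrite -fct_prodE; elim/big_rec: _ => [|i f Pi df]; last exact: differentiableM (dF i Pi) df.
exact: differentiable_cst.
Qed.

Lemma differentiable_det n (M : V -> 'M[R]_n) x :
  (forall i j, differentiable (fun y => M y i j) x) -> differentiable (fun y => \det (M y)) x.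
Proof.
move=> dM; apply: differentiable_big_sum => s _.
apply: differentiableM; first exact: differentiable_cst.
by apply: differentiable_big_prod => i _; exact: dM.
Qed.

End BigDifferentiable.

Section Differentiability.
Variables (R : realType) (N : nat).
Local Notation pt := 'rV[R]_N.
Implicit Types (f : pt -> R) (x : pt).

Lemma smooth_differentiable (U : set pt) f x : smooth U f -> U x -> differentiable f x.
Proof. by move=> sf Ux; exact: (sf 1%N).1 x Ux. Qed.

Lemma smooth_pd_differentiable (U : set pt) f i x : smooth U f -> U x -> differentiable (pd f i) x.
Proof. by move=> sf Ux; exact: ((sf 2%N).2 i).1 x Ux. Qed.

Variables (gamma : 'I_N -> 'I_N -> pt -> R) (U : set pt).
Hypotheses (oU : open U) (smooth_gamma : forall a b, smooth U (gamma a b))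
  (det_gamma : forall y, U y -> \det (gmat gamma y) != 0).

Lemma differentiable_ginv x a d : U x -> differentiable (fun y => ginv gamma y a d) x.
Proof.
move=> Ux; have nU : \forall y \near x, U y by apply: open_nbhs_nbhs.
apply: (@near_eq_differentiable _ _ _ _
  (fun y => (\det (gmat gamma y))^-1 * ((-1) ^+ (d + a) * \det (row' d (col' a (gmat gamma y)))))).
  near=> y; have Uy : U y by near: y.
  by rewrite /ginv /invmx unitmxE unitfE (det_gamma Uy) !mxE /cofactor.
have dgmat i j : differentiable (fun y => gmat gamma y i j) x.
  by under eq_fun do rewrite mxE; exact: smooth_differentiable.
apply: differentiableM; first exact: differentiableV (differentiable_det dgmat) (det_gamma Ux).
apply: differentiableM; first exact: differentiable_cst.
by apply: differentiable_det => i j; under eq_fun do rewrite !mxE; exact: smooth_differentiable.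
Unshelve. all: by end_near. Qed.

Lemma differentiable_Christoffel x a b c : U x -> differentiable (Christoffel gamma a b c) x.
Proof.
move=> Ux; apply: differentiableM; first exact: differentiable_cst.
apply: differentiable_big_sum => e _; apply: differentiableM; first exact: differentiable_ginv.
by apply: differentiableB; [apply: differentiableD|]; exact: smooth_pd_differentiable.
Qed.

Section TensorFields.
Variables (T : tensor R N) (r : nat) (x : pt).
Hypotheses (Ux : U x) (dT : forall ix : seq 'I_N, size ix = r ->
  differentiable (T ix) x /\ forall j, differentiable (pd (T ix) j) x).

Lemma differentiable_nabla (js : seq 'I_N) : size js = r.+1 ->
  differentiable (nabla gamma T js) x.
Proof.
case: js => [//|j0 t] /= [szt]; have szb : size (belast j0 t) = r by rewrite size_belast.
apply: differentiableB; first by case: (dT szb) => _; apply.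
apply: differentiable_big_sum => p _; apply: differentiable_big_sum => c _.
apply: differentiableM; first exact: differentiable_Christoffel.
by case: (dT (ix := set_nth c (belast j0 t) p c)) => //; rewrite size_set_nth -szb; apply/maxn_idPr.
Qed.

Lemma differentiable_sym_nabla (js : seq 'I_N) : size js = r.+1 ->
  differentiable (sym (nabla gamma T) js) x.
Proof.
move=> sz; apply: differentiableM; first exact: differentiable_cst.
by apply: differentiable_big_sum => s _; apply: differentiable_nabla; rewrite size_map size_enum_ord.
Qed.

End TensorFields.

End Differentiability.

Section Telescoping.
(* The theorem's [m] and [n] are [m.+3] and [n.+1] here.  At a fixed time, [a k r], [b k r] and
   [c k r] stand for the rank-r contractions with the velocity of L_(k), nabla L_(k) and L_(k) Q;
   [e k] and [f] for those of sym (nabla L_(k)) Q and C Q; [d k] and [dG] for the derivatives of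
   L_(k) Q and G along the velocity. *)
Variables (R : realFieldType) (m n : nat) (t s f dG : R) (a b c : nat -> nat -> R) (e d : nat -> R).

Hypotheses
  (b_top_n : b n.+1 m.+3 = 0)
  (b_sub_n : b n.+1 m.+2 = - (m.+3%:R / n.+1%:R) * e n)
  (b_sub : forall k, (k < n)%N -> b k.+1 m.+2 = - (m.+3%:R / k.+1%:R) * e k - k.+2%:R * a k.+2 m.+2)
  (b_sub_0 : b 0 m.+2 = m.+3%:R * f - a 1 m.+2)
  (b_mid_n : forall r, (2 <= r <= m.+1)%N -> b n.+1 r = r.+1%:R * c n.+1 r)
  (b_mid : forall k r, (k <= n)%N -> (2 <= r <= m.+1)%N -> b k r = r.+1%:R * c k r - k.+1%:R * a k.+1 r)
  (d_n : d n = (2 * n.+1)%:R * c n.+1 1)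
  (d_sub : forall k, (k < n)%N -> d k = (2 * k.+1)%:R * c k.+1 1 - (k.+2 * k.+1)%:R * a k.+2 1)
  (dG_eq : dG = 2 * c 0 1 - a 1 1)
  (c_n0 : c n.+1 0 = s).

Let add1natr_neq0 k : 1 + k%:R != 0 :> R.
Proof. by rewrite addrC natr1 pnatr_eq0. Qed.

Let rate r := \sum_(0 <= k < n.+2) k%:R * t ^+ k.-1 * a k r.
Let transport r := \sum_(0 <= k < n.+2) t ^+ k * b k r.
Let force r := \sum_(0 <= k < n.+2) t ^+ k * c k r.

Let rateE r : rate r = \sum_(0 <= k < n.+1) k.+1%:R * t ^+ k * a k.+1 r.
Proof. by rewrite /rate big_nat_recl //= mul0r mul0r add0r. Qed.

Let rate_first r :
  \sum_(0 <= k < n.+1) k.+1%:R * t ^+ k * a k.+1 r = a 1 r + \sum_(0 <= k < n) k.+2%:R * t ^+ k.+1 * a k.+2 r.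
Proof. by rewrite big_nat_recl //= expr0 !mul1r. Qed.

Let sum_last (F : nat -> R) :
  \sum_(0 <= k < n.+2) t ^+ k * F k = \sum_(0 <= k < n.+1) t ^+ k * F k + t ^+ n.+1 * F n.+1.
Proof. by rewrite big_nat_recr. Qed.

Let sum_first (F : nat -> R) :
  \sum_(0 <= k < n.+1) t ^+ k * F k = F 0 + \sum_(0 <= k < n) t ^+ k.+1 * F k.+1.
Proof. by rewrite big_nat_recl //= expr0 mul1r. Qed.

Let sum_integrated (F : nat -> R) :
  \sum_(1 <= k < n.+2) t ^+ k / k%:R * F k.-1
  = \sum_(0 <= k < n) t ^+ k.+1 / k.+1%:R * F k + t ^+ n.+1 / n.+1%:R * F n.
Proof. by rewrite big_add1 big_nat_recr. Qed.

Lemma sum_rank_split :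
  \sum_(1 <= r < m.+3) \sum_(0 <= k < n.+2)
      (k%:R * t ^+ k.-1 * a k r + t ^+ k * (b k r.+1 - r%:R * c k r.-1))
  = rate 1 + \sum_(2 <= r < m.+2) (rate r + transport r - r.+1%:R * force r)
    + rate m.+2 + transport m.+2 + transport m.+3 - force 0 - 2 * force 1.
Proof.
have rankE r : \sum_(0 <= k < n.+2) (k%:R * t ^+ k.-1 * a k r + t ^+ k * (b k r.+1 - r%:R * c k r.-1))
    = rate r + transport r.+1 - r%:R * force r.-1.
  by rewrite /rate /transport /force mulr_sumr -big_split -sumrB /=; apply: eq_bigr => k _; ring.
rewrite (eq_bigr _ (fun r _ => rankE r)) sumrB big_split /=.
have -> : \sum_(1 <= r < m.+3) rate r = rate 1 + \sum_(2 <= r < m.+2) rate r + rate m.+2.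
  by rewrite big_ltn // big_nat_recr //= addrA.
have -> : \sum_(1 <= r < m.+3) transport r.+1
    = \sum_(2 <= r < m.+2) transport r + transport m.+2 + transport m.+3.
  have -> : \sum_(1 <= r < m.+3) transport r.+1 = \sum_(2 <= r < m.+4) transport r.
    by rewrite [RHS]big_add1.
  by rewrite big_nat_recr //= big_nat_recr.
have -> : \sum_(1 <= r < m.+3) r%:R * force r.-1
    = force 0 + 2 * force 1 + \sum_(2 <= r < m.+2) r.+1%:R * force r.
  by rewrite big_add1 /= big_ltn // big_ltn //= mul1r addrA.
rewrite sumrB big_split /=; ring.
Qed.

Lemma middle_ranks_cancel : \sum_(2 <= r < m.+2) (rate r + transport r - r.+1%:R * force r) = 0.
Proof.
rewrite big_nat_cond big1 // => r /andP[/andP[r2 rm] _].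
have termwise : \sum_(0 <= k < n.+1)
    (k.+1%:R * t ^+ k * a k.+1 r + t ^+ k * b k r - r.+1%:R * (t ^+ k * c k r)) = 0.
  by rewrite big_nat_cond big1 // => k /andP[/andP[_ kn] _]; rewrite b_mid //; [ring | lia].
rewrite !big_split /= sumrN -mulr_sumr in termwise.
rewrite rateE /transport /force !sum_last b_mid_n; last by lia.
by rewrite -[RHS]termwise; ring.
Qed.

Lemma top_rank_rate :
  rate m.+2 = m.+3%:R * f - \sum_(1 <= k < n.+2) t ^+ k / k%:R * (m.+3%:R * e k.-1) - transport m.+2.
Proof.
rewrite rateE /transport sum_last b_sub_n rate_first sum_first.
rewrite (sum_integrated (fun k => m.+3%:R * e k)) b_sub_0.
have termwise : \sum_(0 <= k < n) (k.+2%:R * t ^+ k.+1 * a k.+2 m.+2 + t ^+ k.+1 * b k.+1 m.+2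
    + t ^+ k.+1 / k.+1%:R * (m.+3%:R * e k)) = 0.
  by rewrite big_nat_cond big1 // => k /andP[/andP[_ kn] _]; rewrite b_sub //; ring.
rewrite !big_split /= in termwise.
by apply/eqP; rewrite -subr_eq0; apply/eqP; rewrite -[RHS]termwise; ring.
Qed.

Lemma first_rank_rate :
  dG = 2 * force 1 - rate 1 - \sum_(1 <= k < n.+2) t ^+ k / k%:R * d k.-1.
Proof.
rewrite /force sum_last rateE dG_eq rate_first (sum_first (c^~ 1%N)) (sum_integrated d) d_n.
have termwise : \sum_(0 <= k < n) (t ^+ k.+1 / k.+1%:R * d k - 2 * (t ^+ k.+1 * c k.+1 1)
    + k.+2%:R * t ^+ k.+1 * a k.+2 1) = 0.
  rewrite big_nat_cond big1 // => k /andP[/andP[_ kn] _]; rewrite d_sub //.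
  by field; exact: add1natr_neq0.
rewrite !big_split /= sumrN -mulr_sumr in termwise.
apply/eqP; rewrite -subr_eq0; apply/eqP; rewrite -[RHS]termwise.
by field; exact: add1natr_neq0.
Qed.

Lemma time_derivative_vanishes :
  - (m.+3%:R * f)
  - \sum_(1 <= k < n.+2) (t ^+ k.-1 * b k.-1 m.+3 - t ^+ k / k%:R * (m.+3%:R * e k.-1))
  + \sum_(1 <= r < m.+3) \sum_(0 <= k < n.+2)
      (k%:R * t ^+ k.-1 * a k r + t ^+ k * (b k r.+1 - r%:R * c k r.-1))
  + s * t ^+ n.+1
  + \sum_(1 <= k < n.+2) (t ^+ k.-1 * c k.-1 0 + t ^+ k / k%:R * d k.-1)
  + dG = 0.
Proof.
have transport_top : transport m.+3 = \sum_(1 <= k < n.+2) t ^+ k.-1 * b k.-1 m.+3.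
  by rewrite /transport sum_last b_top_n mulr0 addr0 big_add1.
have force_0 : force 0 = \sum_(1 <= k < n.+2) t ^+ k.-1 * c k.-1 0 + s * t ^+ n.+1.
  by rewrite /force sum_last c_n0 big_add1 mulrC.
rewrite sum_rank_split middle_ranks_cancel addr0 sumrB big_split /=.
by rewrite transport_top force_0 top_rank_rate first_rank_rate; ring.
Qed.

End Telescoping.

Section FirstIntegral.
(* The theorem's [m] and [n] are [m.+3] and [n.+1] here. *)
Variables (R : realType) (N : nat) (U : set 'rV[R]_N).
Variables (gamma : 'I_N -> 'I_N -> 'rV[R]_N -> R) (Q : 'I_N -> 'rV[R]_N -> R).
Variables (m n : nat) (s : R) (G : 'rV[R]_N -> R) (C : tensor R N) (L : nat -> tensor R N).
Local Notation pt := 'rV[R]_N.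

Hypotheses (oU : open U) (smooth_gamma : forall a b, smooth U (gamma a b))
  (det_gamma : forall x, U x -> \det (gmat gamma x) != 0) (smooth_Q : forall a, smooth U (Q a))
  (smooth_G : smooth U G) (smooth_C : forall ix : seq 'I_N, size ix = m.+3 -> smooth U (C ix))
  (smooth_L : forall k (ix : seq 'I_N), (k <= n.+1)%N -> (1 <= size ix <= m.+2)%N -> smooth U (L k ix))
  (Killing_C : Killing gamma U m.+3 C)
  (symmetric_L : forall k r, (k <= n.+1)%N -> (1 <= r <= m.+2)%N -> totally_symmetric U r (L k))
  (Killing_sym_nabla_L : forall k, (k < n.+1)%N -> Killing gamma U m.+3 (sym (nabla gamma (L k))))
  (Killing_L : Killing gamma U m.+2 (L n.+1))
  (L_Q : forall x, U x -> contrQ (L n.+1) Q [::] x = s).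

Hypotheses
  (top_n : forall x, U x -> forall ix : seq 'I_N, size ix = m.+2 ->
     sym (nabla gamma (L n.+1)) ix x = - (m.+3%:R / n.+1%:R) * contrQ (sym (nabla gamma (L n))) Q ix x)
  (top : forall k, (2 <= k <= n.+1)%N -> forall x, U x -> forall ix : seq 'I_N, size ix = m.+2 ->
     sym (nabla gamma (L k.-1)) ix x
       = - (m.+3%:R / (k - 1)%:R) * contrQ (sym (nabla gamma (L (k - 2)%N))) Q ix x - k%:R * L k ix x)
  (top_0 : forall x, U x -> forall ix : seq 'I_N, size ix = m.+2 ->
     sym (nabla gamma (L 0%N)) ix x = m.+3%:R * contrQ C Q ix x - L 1%N ix x)
  (mid_n : forall r, (2 <= r <= m.+1)%N -> forall x, U x -> forall ix : seq 'I_N, size ix = r ->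
     sym (nabla gamma (L n.+1)) ix x = r.+1%:R * contrQ (L n.+1) Q ix x)
  (mid : forall k r, (1 <= k <= n.+1)%N -> (2 <= r <= m.+1)%N -> forall x, U x ->
     forall ix : seq 'I_N, size ix = r ->
     sym (nabla gamma (L k.-1)) ix x = r.+1%:R * contrQ (L k.-1) Q ix x - k%:R * L k ix x)
  (grad_n : forall x, U x -> forall i : 'I_N,
     pd (contrQ (L n) Q [::]) i x = (2 * n.+1)%:R * contrQ (L n.+1) Q [:: i] x)
  (grad : forall k, (2 <= k <= n.+1)%N -> forall x, U x -> forall i : 'I_N,
     pd (contrQ (L (k - 2)%N) Q [::]) i x
       = (2 * (k - 1))%:R * contrQ (L k.-1) Q [:: i] x - (k * (k - 1))%:R * L k [:: i] x)
  (grad_G : forall x, U x -> forall i : 'I_N, pd G i x = 2 * contrQ (L 0%N) Q [:: i] x - L 1%N [:: i] x).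

Variables (ta tb t : R) (q : R -> pt).
Hypotheses (sol : is_solution gamma Q U ta tb q) (tI : ta < t < tb).

Let x := q t.
Let v := 'D_1 q t.
Let Ux : U x. Proof. by case: (sol tI). Qed.

Let differentiable_L k (ix : seq 'I_N) : (k <= n.+1)%N -> (1 <= size ix <= m.+2)%N ->
  differentiable (L k ix) x /\ forall j, differentiable (pd (L k ix) j) x.
Proof.
move=> kn sz; split; first exact: smooth_differentiable (smooth_L kn sz) Ux.
by move=> j; exact: smooth_pd_differentiable (smooth_L kn sz) Ux.
Qed.

Lemma is_derive_Killing_part :
  is_derive t 1 (fun u => fullcontr m.+3 C (q u) ('D_1 q u)
      - \sum_(1 <= k < n.+2) u ^+ k / k%:R * fullcontr m.+3 (sym (nabla gamma (L k.-1))) (q u) ('D_1 q u))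
    (- (m.+3%:R * fullcontr m.+2 (contrQ C Q) x v)
     - \sum_(1 <= k < n.+2) (t ^+ k.-1 * fullcontr m.+3 (nabla gamma (L k.-1)) x v
         - t ^+ k / k%:R * (m.+3%:R * fullcontr m.+2 (contrQ (sym (nabla gamma (L k.-1))) Q) x v))).
Proof.
apply: is_deriveB.
  apply: is_derive_fullcontr_Killing sol tI Killing_C _ => ix.
  exact: smooth_differentiable (smooth_C (size_tuple ix)) Ux.
apply: is_derive_sum_in => -[|k]; rewrite mem_index_iota => // /andP[_ kn] _.
have dS (ix : m.+3.-tuple 'I_N) : differentiable (sym (nabla gamma (L k)) ix) x.
  apply: (differentiable_sym_nabla oU smooth_gamma det_gamma Ux) (size_tuple ix) => jx sz.
  by apply: differentiable_L; lia.
apply: (is_derive_eq (is_deriveM (is_derive_expr_div t k)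
  (is_derive_fullcontr_Killing sol tI (Killing_sym_nabla_L kn) dS))).
by rewrite fullcontr_sym /GRing.scale /=; ring.
Qed.

Lemma is_derive_L_part :
  is_derive t 1 (fun u => \sum_(1 <= r < m.+3) \sum_(0 <= k < n.+2) u ^+ k * fullcontr r (L k) (q u) ('D_1 q u))
    (\sum_(1 <= r < m.+3) \sum_(0 <= k < n.+2) (k%:R * t ^+ k.-1 * fullcontr r (L k) x v
       + t ^+ k * (fullcontr r.+1 (nabla gamma (L k)) x v - r%:R * fullcontr r.-1 (contrQ (L k) Q) x v))).
Proof.
apply: is_derive_sum_in => -[|r]; rewrite mem_index_iota => // /andP[_ rm] _.
apply: is_derive_sum_in => k; rewrite mem_index_iota => /andP[_ kn] _.
have rank_ok : (1 <= r.+1 <= m.+2)%N by [].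
have dL (ix : r.+1.-tuple 'I_N) : differentiable (L k ix) x.
  by case: (@differentiable_L k ix kn); rewrite ?size_tuple.
have symL := totally_symmetric_at (symmetric_L kn rank_ok) Ux.
apply: (is_derive_eq (is_deriveM (is_derive_expr t k) (is_derive_fullcontr_solution sol tI dL symL))).
by rewrite /GRing.scale /=; ring.
Qed.

Lemma is_derive_potential_part :
  is_derive t 1 (fun u => \sum_(1 <= k < n.+2) u ^+ k / k%:R * contrQ (L k.-1) Q [::] (q u))
    (\sum_(1 <= k < n.+2) (t ^+ k.-1 * fullcontr 0 (contrQ (L k.-1) Q) x v
       + t ^+ k / k%:R * \sum_(i < N) v ord0 i * pd (contrQ (L k.-1) Q [::]) i x)).
Proof.
have dq : derivable q t 1 by case: (sol tI).
apply: is_derive_sum_in => -[|k]; rewrite mem_index_iota => // /andP[_ kn] _.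
have dLQ : differentiable (contrQ (L k) Q [::]) x.
  apply: differentiable_big_sum => c _; apply: differentiableM.
    by case: (@differentiable_L k [:: c] (ltnW kn)).
  exact: smooth_differentiable (smooth_Q c) Ux.
apply: (is_derive_eq (is_deriveM (is_derive_expr_div t k) (is_derive_comp_pd dq dLQ))).
by rewrite fullcontr0 /GRing.scale /=; ring.
Qed.

Lemma is_derive_first_integral :
  is_derive t 1 (fun u =>
      fullcontr m.+3 (fun ix y => C ix y
          - \sum_(1 <= k < n.+2) u ^+ k / k%:R * sym (nabla gamma (L k.-1)) ix y) (q u) ('D_1 q u)
    + \sum_(1 <= r < m.+3) \sum_(0 <= k < n.+2) u ^+ k * fullcontr r (L k) (q u) ('D_1 q u)
    + s * u ^+ n.+2 / n.+2%:R
    + \sum_(1 <= k < n.+2) u ^+ k / k%:R * contrQ (L k.-1) Q [::] (q u)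
    + G (q u)) 0.
Proof.
have dq : derivable q t 1 by case: (sol tI).
have dG := is_derive_comp_pd dq (smooth_differentiable smooth_G Ux).
have ds : is_derive t 1 (fun u => s * u ^+ n.+2 / n.+2%:R) (s * t ^+ n.+1).
  under eq_fun do rewrite -mulrA.
  apply: (is_derive_eq (is_deriveM (is_derive_cst s t 1) (is_derive_expr_div t n.+1))).
  by rewrite /GRing.scale /= mulr0 addr0 mulrC.
under eq_fun do rewrite fullcontrB_sum.
apply: (is_derive_eq (is_deriveD (is_deriveD (is_deriveD (is_deriveD
  is_derive_Killing_part is_derive_L_part) ds) is_derive_potential_part) dG)).
apply: (@time_derivative_vanishes _ m n t s (fullcontr m.+2 (contrQ C Q) x v) _
  (fun k r => fullcontr r (L k) x v) (fun k r => fullcontr r (nabla gamma (L k)) x v)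
  (fun k r => fullcontr r (contrQ (L k) Q) x v)
  (fun k => fullcontr m.+2 (contrQ (sym (nabla gamma (L k))) Q) x v)
  (fun k => \sum_(i < N) v ord0 i * pd (contrQ (L k) Q [::]) i x)) => /=.
- exact: fullcontr_nabla_Killing Killing_L Ux.
- by rewrite -fullcontr_sym; apply: fullcontr_scale => ix; exact: top_n.
- move=> k kn; rewrite -fullcontr_sym; apply: fullcontr_lincomb => ix sz.
  by have := @top k.+2 kn _ Ux ix sz; rewrite !subSS !subn0.
- rewrite -fullcontr_sym -[X in _ - X]mul1r; apply: fullcontr_lincomb => ix sz.
  by rewrite mul1r; exact: top_0.
- by move=> r rm; rewrite -fullcontr_sym; apply: fullcontr_scale => ix; exact: mid_n.
- move=> k r kn rm; rewrite -fullcontr_sym; apply: fullcontr_lincomb => ix.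
  exact: (@mid k.+1 r kn rm _ Ux ix).
- by rewrite fullcontr1 mulr_sumr; apply: eq_bigr => i _; rewrite grad_n //; ring.
- move=> k kn; rewrite !fullcontr1 !mulr_sumr -sumrB; apply: eq_bigr => i _.
  by have := @grad k.+2 kn _ Ux i; rewrite !subSS !subn0 => ->; ring.
- by rewrite !fullcontr1 !mulr_sumr -sumrB; apply: eq_bigr => i _; rewrite grad_G //; ring.
- by rewrite fullcontr0; exact: L_Q.
Qed.

End FirstIntegral.

Theorem theorem1 (R : realType) (N : nat) (U : set 'rV[R]_N)
  (gamma : 'I_N -> 'I_N -> 'rV[R]_N -> R) (Q : 'I_N -> 'rV[R]_N -> R)
  (m n : nat) (s : R) (G : 'rV[R]_N -> R)
  (C : tensor R N) (L : nat -> tensor R N) :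
  open U ->
  (forall a b, smooth U (gamma a b)) ->
  (forall a b x, U x -> gamma a b x = gamma b a x) ->
  (forall x, U x -> \det (gmat gamma x) != 0) ->
  (forall a, smooth U (Q a)) ->
  (3 <= m)%N -> (1 <= n)%N ->
  smooth U G ->
  (forall ix : seq 'I_N, size ix = m -> smooth U (C ix)) ->
  (forall k (ix : seq 'I_N), (k <= n)%N -> (1 <= size ix <= m - 1)%N -> smooth U (L k ix)) ->
  Killing gamma U m C ->
  (forall k r, (k <= n)%N -> (1 <= r <= m - 1)%N -> totally_symmetric U r (L k)) ->
  (* (i) *)
  (forall k, (k < n)%N -> Killing gamma U m (sym (nabla gamma (L k)))) ->
  Killing gamma U (m - 1) (L n) ->
  (* (ii) *)
  (forall x, U x -> contrQ (L n) Q [::] x = s) ->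
  (* (iii) *)
  (forall x, U x -> forall ix : seq 'I_N, size ix = (m - 1)%N ->
     sym (nabla gamma (L n)) ix x
       = - (m%:R / n%:R) * contrQ (sym (nabla gamma (L n.-1))) Q ix x) ->
  (forall k, (2 <= k <= n)%N -> forall x, U x -> forall ix : seq 'I_N, size ix = (m - 1)%N ->
     sym (nabla gamma (L k.-1)) ix x
       = - (m%:R / (k - 1)%:R) * contrQ (sym (nabla gamma (L (k - 2)%N))) Q ix x
         - k%:R * L k ix x) ->
  (forall x, U x -> forall ix : seq 'I_N, size ix = (m - 1)%N ->
     sym (nabla gamma (L 0%N)) ix x = m%:R * contrQ C Q ix x - L 1%N ix x) ->
  (forall r, (2 <= r <= m - 2)%N -> forall x, U x -> forall ix : seq 'I_N, size ix = r ->
     sym (nabla gamma (L n)) ix x = r.+1%:R * contrQ (L n) Q ix x) ->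
  (forall k r, (1 <= k <= n)%N -> (2 <= r <= m - 2)%N ->
     forall x, U x -> forall ix : seq 'I_N, size ix = r ->
     sym (nabla gamma (L k.-1)) ix x
       = r.+1%:R * contrQ (L k.-1) Q ix x - k%:R * L k ix x) ->
  (forall x, U x -> forall i : 'I_N,
     pd (contrQ (L n.-1) Q [::]) i x = (2 * n)%:R * contrQ (L n) Q [:: i] x) ->
  (forall k, (2 <= k <= n)%N -> forall x, U x -> forall i : 'I_N,
     pd (contrQ (L (k - 2)%N) Q [::]) i x
       = (2 * (k - 1))%:R * contrQ (L k.-1) Q [:: i] x - (k * (k - 1))%:R * L k [:: i] x) ->
  (forall x, U x -> forall i : 'I_N,
     pd G i x = 2 * contrQ (L 0%N) Q [:: i] x - L 1%N [:: i] x) ->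
  first_integral gamma Q U (fun t x v =>
      fullcontr m (fun ix y => C ix y
          - \sum_(1 <= k < n.+1) t ^+ k / k%:R * sym (nabla gamma (L k.-1)) ix y) x v
    + \sum_(1 <= r < m) \sum_(0 <= k < n.+1) t ^+ k * fullcontr r (L k) x v
    + s * t ^+ n.+1 / n.+1%:R
    + \sum_(1 <= k < n.+1) t ^+ k / k%:R * contrQ (L k.-1) Q [::] x
    + G x).
Proof.
move=> oU smooth_gamma _ det_gamma smooth_Q m_ge3 n_ge1 smooth_G smooth_C smooth_L Killing_C symmetric_L
  Killing_sym_nabla_L Killing_L L_Q top_n top top_0 mid_n mid grad_n grad grad_G.
have [m' defm] : exists m', m = m'.+3 by exists (m - 3)%N; lia.
have [n' defn] : exists n', n = n'.+1 by exists n.-1; lia.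
subst m n.
move=> ta tb q sol; apply: is_derive0_itv_cst => t tI.
by apply: is_derive_first_integral sol tI.
Qed.
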